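(* For every integer $n\ge1$, $$\sum_{k=0}^{2n-1}(-1)^k\binom{2n-1}{k}^2H_k=\frac{(-16)^n}{8n\binom{2n}{n}}.$$
   Context: $H_k=\sum_{i=1}^k1/i$ with $H_0=0$. *)

From mathcomp Require Import all_boot all_order all_algebra.
Set Implicit Arguments. Unset Strict Implicit. Unset Printing Implicit Defensive.
Import Order.TTheory GRing.Theory Num.Theory.
Local Open Scope ring_scope.

Definition harmonic (k : nat) : rat := \sum_(1 <= i < k.+1) (i%:R)^-1.

From mathcomp Require Import all_boot all_order all_algebra.
From mathcomp Require Import ring zify.
Set Implicit Arguments.
Unset Strict Implicit.
Unset Printing Implicit Defensive.
Import Order.TTheory GRing.Theory Num.Theory.
Local Open Scope ring_scope.

(* For odd m = 2n - 1 we evaluate S = sum_k (-1)^k C(m,k)^2 H_k through the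
   polynomial F_m = (1 + X)^m L_m, where L_m = sum_(1 <= j <= m)
   (-1)^(j-1) X^j / j is the truncated series of log (1 + X).
   1. F_m solves (1 + X) F_m' = m F_m + (1 + X)^m (1 - (-X)^m); comparing
      coefficients gives [X^k] F_m = C(m,k) (H_m - H_(m-k)) for k <= m.
   2. For odd m the reflection k -> m - k flips the sign of (-1)^k C(m,k), so
      sum_k (-1)^k C(m,k)^2 = 0 and S = sum_k (-1)^k C(m,k) [X^k] F_m, which is
      - [X^m] ((1 - X)^m F_m) = - [X^m] ((1 - X^2)^m L_m).
   3. That coefficient is sum_(2l <= m) (-1)^l C(m,l) / (m - 2l), half of the
      full alternating sum by reflection again; the full sum is given by the
      partial fraction identity
         sum_j (-1)^j C(m,j) / (a + j) = m! / (a (a + 1) ... (a + m))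
      at a = -m/2.
   4. The centered product prod_(i <= m) (i - m/2) has a closed form in
      factorials, which turns m! / (4 prod) into (-16)^n / (8 n C(2n,n)). *)

Lemma coef_linear_pow (R : comNzRingType) (c : R) (m i : nat) :
  ((c *: 'X + 1) ^+ m)`_i = c ^+ i *+ 'C(m, i).
Proof.
elim: m i => [|m IH] [|i]; rewrite ?expr0 ?coef1 //.
- by rewrite exprS mulrDl mul1r coefD -scalerAl coefZ coefXM /= mulr0 add0r IH !bin0.
- rewrite exprS mulrDl mul1r coefD -scalerAl coefZ coefXM /= !IH binS mulrnDr.
  by rewrite addrC exprS mulrnAr.
Qed.

Lemma coef_XD1_pow (R : comNzRingType) (m i : nat) :
  (('X + 1 : {poly R}) ^+ m)`_i = 'C(m, i)%:R.
Proof. by have := coef_linear_pow (1 : R) m i; rewrite scale1r expr1n. Qed.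

Lemma coef_1BX_pow (R : comNzRingType) (m i : nat) :
  ((1 - 'X : {poly R}) ^+ m)`_i = (-1) ^+ i * 'C(m, i)%:R.
Proof. by rewrite addrC -scaleN1r coef_linear_pow mulr_natr. Qed.

Lemma mulXD1_alt_geometric (R : comNzRingType) (m : nat) :
  ('X + 1) * \poly_(i < m) (-1) ^+ i = 1 - (- 'X) ^+ m :> {poly R}.
Proof.
have -> : \poly_(i < m) (-1) ^+ i = \sum_(i < m) (- 'X) ^+ i :> {poly R}.
  by rewrite poly_def; apply: eq_bigr => i _; rewrite -scaleN1r exprZn.
by apply: oppr_inj; rewrite opprB subrX1; ring.
Qed.

Definition logTrunc (m : nat) : {poly rat} :=
  \poly_(j < m.+1) (if j == 0%N then 0 else (-1) ^+ j.-1 / j%:R).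

Lemma deriv_logTrunc (m : nat) : (logTrunc m)^`() = \poly_(i < m) (-1) ^+ i.
Proof.
apply/polyP => i; rewrite coef_deriv !coef_poly ltnS.
case: ifP => _; last by rewrite mul0rn.
by rewrite /= -[_ *+ i.+1]mulr_natr divfK // pnatr_eq0.
Qed.

Definition binLog (m : nat) : {poly rat} := ('X + 1) ^+ m * logTrunc m.

Lemma binLog_ode (m : nat) :
  ('X + 1) * (binLog m)^`() = binLog m *+ m + ('X + 1) ^+ m * (1 - (- 'X) ^+ m).
Proof.
rewrite /binLog derivM deriv_exp derivD derivX derivC addr0 mul1r deriv_logTrunc.
rewrite -mulXD1_alt_geometric.
case: m => [|m] /=; first by rewrite !mulr0n; ring.
by rewrite exprS; ring.
Qed.

Lemma coef_binLog_rec (m k : nat) : (k < m)%N ->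
  (binLog m)`_k.+1 * k.+1%:R = (binLog m)`_k * (m - k)%:R + 'C(m, k)%:R.
Proof.
move=> lt_km.
have := congr1 (fun p : {poly rat} => p`_k) (binLog_ode m).
rewrite mulrDl mul1r coefD coefXM !coef_deriv coefD coefMn mulrBr mulr1 coefB.
rewrite exprNn mulrA coefMXn lt_km subr0 coef_XD1_pow.
have -> : (if k == 0%N then 0 else (binLog m)`_k.-1.+1 *+ k.-1.+1)
    = (binLog m)`_k *+ k by case: k lt_km.
rewrite -[_ *+ k]mulr_natr -[_ *+ k.+1]mulr_natr -[_ *+ m]mulr_natr natrB 1?ltnW //.
move: ((binLog m)`_k) ((binLog m)`_k.+1) => a b ode_k.
by rewrite mulrBr addrAC -ode_k; ring.
Qed.

Lemma harmonicS (k : nat) : harmonic k.+1 = harmonic k + k.+1%:R^-1.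
Proof. by rewrite /harmonic big_nat_recr. Qed.

Lemma coef_binLog (m k : nat) : (k <= m)%N ->
  (binLog m)`_k = 'C(m, k)%:R * (harmonic m - harmonic (m - k)).
Proof.
elim: k => [|k IH] le_km.
  by rewrite subn0 subrr mulr0 /binLog coefM big_ord1 /logTrunc coef_poly /= mulr0.
have lt_km : (k < m)%N by [].
have nz_k1 : k.+1%:R != 0 :> rat by rewrite pnatr_eq0.
have nz_mk : (m - k)%:R != 0 :> rat by rewrite pnatr_eq0 subn_eq0 -ltnNge.
have harm_mk : harmonic (m - k) = harmonic (m - k.+1) + (m - k)%:R^-1.
  by rewrite -(subnSK lt_km) harmonicS.
have bin_rec : 'C(m, k.+1)%:R * k.+1%:R = 'C(m, k)%:R * (m - k)%:R :> rat.
  by rewrite -!natrM mulnC mul_bin_left mulnC.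
apply: (mulIf nz_k1); rewrite coef_binLog_rec // IH 1?ltnW // harm_mk.
by rewrite [RHS]mulrAC bin_rec; field; exact: nz_mk.
Qed.

Lemma alt_binomial_pascal (R : pzRingType) (g : nat -> R) (m : nat) :
  \sum_(0 <= j < m.+2) (-1) ^+ j * 'C(m.+1, j)%:R * g j
  = \sum_(0 <= j < m.+1) (-1) ^+ j * 'C(m, j)%:R * (g j - g j.+1).
Proof.
under [RHS]eq_bigr do rewrite mulrBr.
rewrite sumrB big_nat_recl // [X in _ = X - _]big_nat_recl //.
under eq_bigr do rewrite binS natrD mulrDr mulrDl.
rewrite big_split /= big_nat_recr //= (bin_small (ltnSn m)) mulr0 mul0r addr0.
rewrite !bin0 addrA; congr (_ + _).
by rewrite -sumrN; apply: eq_bigr => i _; rewrite exprS mulN1r !mulNr.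
Qed.

Lemma prod_shift_neq0 (F : fieldType) (a : F) (n : nat) :
  (forall i, (i < n)%N -> a + i%:R != 0) -> \prod_(0 <= i < n) (a + i%:R) != 0.
Proof.
move=> nz; rewrite prodf_seq_neq0; apply/allP => i.
by rewrite mem_index_iota => /andP[_ lt_in]; exact: nz.
Qed.

Lemma alt_binomial_partial_fractions (F : fieldType) (m : nat) (a : F) :
  (forall i, (i <= m)%N -> a + i%:R != 0) ->
  \sum_(0 <= j < m.+1) (-1) ^+ j * 'C(m, j)%:R / (a + j%:R)
  = m`!%:R / \prod_(0 <= i < m.+1) (a + i%:R).
Proof.
elim: m a => [|m IH] a nz; first by rewrite !big_nat1 expr0 mul1r bin0 fact0.
have shift i : a + 1 + i%:R = a + i.+1%:R by rewrite -addrA (addrC 1) natr1.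
have nz_shift i : (i <= m)%N -> a + 1 + i%:R != 0.
  by move=> le_im; rewrite shift; exact: nz.
rewrite alt_binomial_pascal (eq_bigr _ (fun j _ => mulrBr _ _ _)) sumrB.
under [X in _ - X]eq_bigr do rewrite -shift.
rewrite (IH a (fun i le_im => nz i (leqW le_im))) (IH (a + 1) nz_shift).
have nz_a : a != 0 by have := nz 0%N isT; rewrite addr0.
have nz_last : a + m.+1%:R != 0 by exact: nz.
have nz_prod : \prod_(0 <= i < m.+1) (a + i%:R) != 0.
  by apply: prod_shift_neq0 => i lt_im; exact: nz (ltnW lt_im).
have prod_shifted : \prod_(0 <= i < m.+1) (a + 1 + i%:R)
    = \prod_(0 <= i < m.+1) (a + i%:R) * (a + m.+1%:R) / a.
  rewrite -big_nat_recr //= [X in _ = X / _]big_nat_recl // addr0.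
  by rewrite [a * _]mulrC mulfK //; apply: eq_bigr => i _; rewrite shift.
rewrite prod_shifted [X in _ = _ / X]big_nat_recr //= factS natrM; field.
by rewrite (addrC 1) natr1 nz_last nz_prod nz_a.
Qed.

Lemma centered_prod_rec (R : numFieldType) (p : nat) :
  \prod_(0 <= i < (2 * p.+1).+2) (- ((2 * p.+1).+1%:R / 2) + i%:R : R)
  = - (((2 * p.+1).+1%:R / 2) ^+ 2)
    * \prod_(0 <= i < (2 * p).+2) (- ((2 * p).+1%:R / 2) + i%:R).
Proof.
have -> : (2 * p.+1).+2 = ((2 * p).+2).+2 by lia.
rewrite big_nat_recl // big_nat_recr //= addr0.
have -> : (2 * p.+1).+1 = ((2 * p).+1).+2 by lia.
rewrite (eq_bigr (fun i : nat => - ((2 * p).+1%:R / 2) + i%:R)); first by field.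
by move=> i _; rewrite -[(2 * p).+3]addn2 -addn1 !natrD; field.
Qed.

Lemma centered_prod (R : numFieldType) (p : nat) :
  \prod_(0 <= i < (2 * p).+2) (- ((2 * p).+1%:R / 2) + i%:R : R)
  = (-1) ^+ p.+1 * ((2 * p).+2)`!%:R ^+ 2 / (16 ^+ p.+1 * (p.+1)`!%:R ^+ 2).
Proof.
elim: p => [|p IH].
  rewrite muln0 big_nat_recr // big_nat1 (_ : 2`! = 2)%N // (_ : 1`! = 1)%N //=.
  by field.
rewrite centered_prod_rec IH.
have -> : (2 * p.+1).+2 = ((2 * p).+2).+2 by lia.
have -> : (2 * p.+1).+1 = (2 * p).+3 by lia.
have : (p.+1)`!%:R != 0 :> R by rewrite pnatr_eq0 -lt0n fact_gt0.
rewrite (factS (2 * p).+3) (factS (2 * p).+2) (factS p.+1).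
move: ((2 * p).+2)`! (p.+1)`! => F G nz_G.
rewrite (_ : (2 * p).+4 = 2 * p.+2)%N; last by lia.
rewrite !natrM (exprS _ p.+1) (exprS _ p.+1); field.
by rewrite nz_G -natrD pnatr_eq0 expf_neq0 // pnatr_eq0.
Qed.

Lemma central_binomial_fact (n : nat) : ('C(2 * n, n) * (n`! * n`!) = (2 * n)`!)%N.
Proof.
have le_n2n : (n <= 2 * n)%N by lia.
have sub_n : (2 * n - n = n)%N by lia.
by have := bin_fact le_n2n; rewrite sub_n.
Qed.

Lemma fact_over_centered_prod (p : nat) :
  ((2 * p).+1)`!%:R / \prod_(0 <= i < (2 * p).+2) (- ((2 * p).+1%:R / 2) + i%:R) / 4
  = ((-16) ^+ p.+1 : rat) / (8 * p.+1%:R * 'C(2 * p.+1, p.+1)%:R).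
Proof.
rewrite centered_prod.
have -> : (2 * p).+2 = (2 * p.+1)%N by lia.
have nz_fact k : k`!%:R != 0 :> rat by rewrite pnatr_eq0 -lt0n fact_gt0.
have fact_2n : (2 * p.+1)`! = (2 * p.+1 * ((2 * p).+1)`!)%N.
  by rewrite (_ : 2 * p.+1 = (2 * p).+2)%N //; lia.
have binE : 'C(2 * p.+1, p.+1)%:R = (2 * p.+1)`!%:R / (p.+1)`!%:R ^+ 2 :> rat.
  by rewrite -central_binomial_fact natrM natrM -expr2 mulfK // expf_neq0.
have neg16 : (-16 : rat) ^+ p.+1 = (-1) ^+ p.+1 * 16 ^+ p.+1.
  by rewrite -exprMn mulN1r.
rewrite binE fact_2n neg16 natrM (natrM _ 2).
have nz_16 : 16 ^+ p.+1 != 0 :> rat by rewrite expf_neq0.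
have nz_n : 1 + p%:R != 0 :> rat by rewrite addrC natr1 pnatr_eq0.
move: (nz_fact (2 * p).+1) (nz_fact p.+1) nz_16.
move: ((2 * p).+1)`!%:R (p.+1)`!%:R (16 ^+ p.+1) => F G c nz_F nz_G nz_c.
by rewrite -signr_odd; case: (odd p.+1); rewrite ?expr0 ?expr1; field;
  rewrite nz_G nz_F nz_n nz_c.
Qed.

Section OddDegree.

Variable m : nat.
Hypothesis m_odd : odd m.

Lemma sign_reflect (R : pzRingType) (k : nat) : (k <= m)%N ->
  (-1) ^+ (m - k) = - (-1) ^+ k :> R.
Proof.
move=> le_km; rewrite -signr_odd oddB // m_odd -[in RHS]signr_odd.
by case: (odd k); rewrite ?expr0 ?expr1 ?opprK.
Qed.

Lemma alt_binomial_reflect (R : pzRingType) (G : nat -> R) :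
  \sum_(0 <= k < m.+1) (-1) ^+ k * 'C(m, k)%:R * G k
  = - \sum_(0 <= k < m.+1) (-1) ^+ k * 'C(m, k)%:R * G (m - k)%N.
Proof.
rewrite big_nat_rev add0n -sumrN; apply: eq_big_nat => k /andP[_ lt_km].
by rewrite subSS bin_sub // sign_reflect // !mulNr.
Qed.

Lemma alt_binomial_sq_sum :
  \sum_(0 <= k < m.+1) (-1) ^+ k * 'C(m, k)%:R ^+ 2 = 0 :> rat.
Proof.
set s := LHS; have s_opp : s = - s.
  rewrite {1}/s; under eq_bigr do rewrite expr2 mulrA.
  rewrite alt_binomial_reflect; congr (- _); apply: eq_big_nat => k /andP[_ lt_km].
  by rewrite bin_sub // expr2 mulrA.
by apply/eqP; move/eqP: s_opp; rewrite -addr_eq0 -mulr2n mulrn_eq0.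
Qed.

Lemma alt_sum_coef_binLog :
  \sum_(0 <= k < m.+1) (-1) ^+ k * 'C(m, k)%:R * (binLog m)`_k
  = \sum_(0 <= k < m.+1) (-1) ^+ k * 'C(m, k)%:R ^+ 2 * harmonic k.
Proof.
have split_term k : (k < m.+1)%N -> (-1) ^+ k * 'C(m, k)%:R * (binLog m)`_k
    = (-1) ^+ k * 'C(m, k)%:R ^+ 2 * harmonic m
      - (-1) ^+ k * 'C(m, k)%:R * ('C(m, k)%:R * harmonic (m - k)).
  by move=> le_km; rewrite coef_binLog //; ring.
rewrite (eq_big_nat _ _ (fun k kP => split_term k (andP kP).2)).
rewrite sumrB -mulr_suml alt_binomial_sq_sum mul0r sub0r.
rewrite alt_binomial_reflect opprK; apply: eq_big_nat => k /andP[_ lt_km].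
by rewrite subKn // bin_sub //; ring.
Qed.

Lemma coef_1BX_binLog :
  ((1 - 'X) ^+ m * binLog m)`_m
  = - \sum_(0 <= k < m.+1) (-1) ^+ k * 'C(m, k)%:R * (binLog m)`_k.
Proof.
rewrite (alt_binomial_reflect (fun k => (binLog m)`_k)) opprK coefM big_mkord.
by apply: eq_bigr => k _; rewrite coef_1BX_pow.
Qed.

Lemma coef_logTrunc_odd (l : nat) : (2 * l <= m)%N ->
  (logTrunc m)`_(m - 2 * l) = (m%:R - 2 * l%:R)^-1.
Proof.
move=> le_2lm; rewrite -natrM -natrB //.
have : odd (m - 2 * l) by rewrite oddB // m_odd mul2n odd_double.
move: (m - 2 * l)%N (leq_subr (2 * l) m) => [|d] // le_dm /= even_d.
by rewrite /logTrunc coef_poly ltnS le_dm /= -signr_odd (negbTE even_d) mul1r.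
Qed.

(* Since (1 - X)^m F_m = (1 - X^2)^m L_m, its middle coefficient only sees the
   terms l with 2l <= m. *)
Lemma coef_1BX_binLog_half :
  ((1 - 'X) ^+ m * binLog m)`_m = \sum_(0 <= l < m.+1)
    (-1) ^+ l * 'C(m, l)%:R * (if (m < 2 * l)%N then 0 else (m%:R - 2 * l%:R)^-1).
Proof.
have -> : (1 - 'X) ^+ m * binLog m = ((-1) *: 'X ^+ 2 + 1) ^+ m * logTrunc m.
  by rewrite /binLog mulrA -exprMn scaleN1r; congr (_ ^+ _ * _); ring.
rewrite exprD1n mulr_suml coef_sum big_mkord; apply: eq_bigr => l _.
rewrite exprZn -exprM mulrnAl coefMn -scalerAl coefZ coefXnM.
case: ltnP => [_|le_2lm]; first by rewrite !mulr0 mul0rn.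
by rewrite coef_logTrunc_odd // -mulr_natr; ring.
Qed.

(* The terms with 2l > m mirror those with 2l < m, so the restricted sum is
   half of the full one. *)
Lemma alt_sum_half :
  \sum_(0 <= l < m.+1) (-1) ^+ l * 'C(m, l)%:R * (m%:R - 2 * l%:R)^-1
  = 2 * \sum_(0 <= l < m.+1)
    (-1) ^+ l * 'C(m, l)%:R * (if (m < 2 * l)%N then 0 else (m%:R - 2 * l%:R)^-1)
  :> rat.
Proof.
have [p m_def] : exists p, m = (2 * p).+1.
  by exists m./2; rewrite -[LHS]odd_double_half m_odd mul2n.
pose up (l : nat) : rat := if (m < 2 * l)%N then (m%:R - 2 * l%:R)^-1 else 0.
have up_reflect l : (l <= m)%N ->
    up (m - l)%N = - (if (m < 2 * l)%N then 0 else (m%:R - 2 * l%:R)^-1).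
  move=> le_lm; rewrite /up natrB // (_ : (m < 2 * (m - l)) = ~~ (m < 2 * l))%N.
    by case: ltnP => //= _; rewrite ?oppr0 // -invrN; congr (_^-1); ring.
  by rewrite -leqNgt; apply/idP/idP; lia.
have up_sum : \sum_(0 <= l < m.+1) (-1) ^+ l * 'C(m, l)%:R * up l
    = \sum_(0 <= l < m.+1) (-1) ^+ l * 'C(m, l)%:R *
      (if (m < 2 * l)%N then 0 else (m%:R - 2 * l%:R)^-1).
  rewrite alt_binomial_reflect -sumrN; apply: eq_big_nat => l /andP[_ lt_lm].
  by rewrite up_reflect // mulrN opprK.
transitivity (\sum_(0 <= l < m.+1) (-1) ^+ l * 'C(m, l)%:R *
      (if (m < 2 * l)%N then 0 else (m%:R - 2 * l%:R)^-1)
    + \sum_(0 <= l < m.+1) (-1) ^+ l * 'C(m, l)%:R * up l).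
  rewrite -big_split; apply: eq_bigr => l _.
  by rewrite /= -mulrDr /up; case: ifP; rewrite ?add0r ?addr0.
by rewrite up_sum -mulr2n mulr_natl.
Qed.

Lemma odd_sub_double_neq0 (l : nat) : m%:R - 2 * l%:R != 0 :> rat.
Proof.
rewrite subr_eq0 -natrM eqr_nat; apply: contraTneq m_odd => ->.
by rewrite mul2n odd_double.
Qed.

Lemma centered_neq0 (i : nat) : - (m%:R / 2) + i%:R != 0 :> rat.
Proof.
have -> : - (m%:R / 2) + i%:R = - (m%:R - 2 * i%:R) / 2 :> rat by field.
by rewrite mulf_neq0 ?oppr_eq0 ?odd_sub_double_neq0.
Qed.

(* The full sum, by partial fractions at a = -m/2. *)
Lemma alt_sum_inv_centered :
  \sum_(0 <= l < m.+1) (-1) ^+ l * 'C(m, l)%:R * (m%:R - 2 * l%:R)^-1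
  = - (m`!%:R / \prod_(0 <= i < m.+1) (- (m%:R / 2) + i%:R)) / 2 :> rat.
Proof.
have centered l : - (m%:R / 2) + l%:R = - (m%:R - 2 * l%:R) / 2 :> rat by field.
rewrite -(alt_binomial_partial_fractions (fun i _ => centered_neq0 i)).
rewrite mulNr mulr_suml -sumrN; apply: eq_bigr => l _.
by rewrite centered; field; rewrite odd_sub_double_neq0.
Qed.

Lemma alt_harmonic_sum_closed :
  \sum_(0 <= k < m.+1) (-1) ^+ k * 'C(m, k)%:R ^+ 2 * harmonic k
  = m`!%:R / \prod_(0 <= i < m.+1) (- (m%:R / 2) + i%:R) / 4.
Proof.
rewrite -alt_sum_coef_binLog; apply: oppr_inj.
rewrite -coef_1BX_binLog coef_1BX_binLog_half.
apply: (@mulfI _ 2) => //; rewrite -alt_sum_half alt_sum_inv_centered; field.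
by apply: prod_shift_neq0 => i _; exact: centered_neq0.
Qed.

End OddDegree.

Theorem mainTheorem9 (n : nat) (hn : (1 <= n)%N) :
  \sum_(0 <= k < (2 * n - 1).+1)
     (-1) ^+ k * ('C(2 * n - 1, k)%:R) ^+ 2 * harmonic k
  = ((-16) ^+ n : rat) / (8 * n%:R * ('C(2 * n, n))%:R).
Proof.
case: n hn => [//|p] _.
have -> : (2 * p.+1 - 1 = (2 * p).+1)%N by lia.
have odd_m : odd (2 * p).+1 by rewrite /= mul2n odd_double.
by rewrite alt_harmonic_sum_closed // fact_over_centered_prod.
Qed.
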